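(* Let $\mathfrak N=\{1,\dots,p\}$ and let $\phi:2^{\mathfrak N}\to\{0,1\}$ be a simple game, i.e. $\phi(\mathfrak N)=1$, $\phi(\emptyset)=0$, and $T\subset S$, $\phi(S)=0$ imply $\phi(T)=0$; let $\mathcal W=\{C\subset\mathfrak N:\phi(C)=1\}$ and define the aggregation function $\delta:\{0,1\}^p\to\{0,1\}$ by $$\delta(x_1,\dots,x_p)=\sum_{C\in\mathcal W}\prod_{k\in C}x_k\prod_{k\notin C}(1-x_k).$$ Let $\Delta$ be the associated set function on events, defined by $\mathbb I_{\Delta(A_1,\dots,A_p)}=\delta(\mathbb I_{A_1},\dots,\mathbb I_{A_p})$. Let $(X_1,\Pi_1)$ be a random element with values in $\mathbb E\times[0,1]^p$ (with $\mathbb E\subset\mathbb R^m$ equipped with its Borel $\sigma$-field $\mathcal B$), defined on a probability space with probability measure $\mathbf P_{x,\pi}$ and expectation $\mathbf E_{x,\pi}$ (the law of the process started from the state $(x,\pi)$); write $\Pi_1^i$ for the $i$-th coordinate of $\Pi_1$. Fix a player $i\in\mathfrak N$ and a real function $g_i$ on $\mathbb E\times[0,1]^p$ such that $g_i(X_1,\Pi_1)$ is integrable. For each $j\neq i$ fix a Borel set $C^j$ and let $D_1^j=\{(X_1,\Pi_1)\in C^j\}$. For an event $A$ put ${}^iD_1(A)=\Delta(D_1^1,\dots,D_1^{i-1},A,D_1^{i+1},\dots,D_1^p)$, and for a Borel set $C^i$ put $D_1^i=\{(X_1,\Pi_1)\in C^i\}$ and $$\psi(C^i)=\mathbf E_{x,\pi}\Big[(1-\Pi_1^i)\,\mathbb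 I_{{}^iD_1(D_1^i)}+g_i(X_1,\Pi_1)\,\mathbb I_{\overline{{}^iD_1(D_1^i)}}\Big].$$ Then the set ${}^{*}C^i=\{(x,\pi):1-\pi_i-g_i(x,\pi)\le 0\}$ satisfies $\psi({}^{*}C^i)=\inf_{C^i}\psi(C^i)$, the infimum taken over all Borel sets $C^i$, and $$\psi({}^{*}C^i)=\mathbf E_{x,\pi}\big(1-\Pi_1^i-g_i(X_1,\Pi_1)\big)^{+}\mathbb I_{{}^iD_1(\emptyset)}-\mathbf E_{x,\pi}\big(1-\Pi_1^i-g_i(X_1,\Pi_1)\big)^{-}\mathbb I_{{}^iD_1(\Omega)}+\mathbf E_{x,\pi}\,g_i(X_1,\Pi_1).$$
   Context: This arises in a distributed disorder detection model: sensor $i$ observes a Markov process $X_n$ and the posterior process $\Pi_n^i=\mathbf P(\theta_i\le n\mid\mathcal F_n)$ of its disorder time $\theta_i$; each sensor's stopping decision at time $1$ is the event $D_1^j$, and the system stops when the aggregated decision $\delta$ of the sensors' votes equals $1$, i.e. on $\Delta(D_1^1,\dots,D_1^p)$. Here $(y)^+=\max(y,0)$, $(y)^-=\max(-y,0)$, $\overline{A}$ denotes the complement of an event $A$, and $\Omega$ is the whole sample space. *)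

From HB Require Import structures.
From mathcomp Require Import all_boot all_order all_algebra.
From mathcomp Require Import all_classical all_reals all_analysis.
Set Implicit Arguments. Unset Strict Implicit. Unset Printing Implicit Defensive.
Import Order.TTheory GRing.Theory Num.Theory.
Local Open Scope classical_set_scope.
Local Open Scope ring_scope.

Definition simple_game (p : nat) (phi : {set 'I_p} -> bool) : Prop :=
  [/\ phi [set: 'I_p]%SET, ~~ phi (@finset.set0 _) &
      forall S T : {set 'I_p}, T \subset S -> ~~ phi S -> ~~ phi T].

Definition delta (p : nat) (phi : {set 'I_p} -> bool) (x : 'I_p -> bool) : nat :=
  (\sum_(C : {set 'I_p} | phi C)
     (\prod_(k in C) (x k : nat)) * (\prod_(k in ~: C) (1 - (x k : nat))))%N.

Definition Delta (T : Type) (p : nat) (phi : {set 'I_p} -> bool)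
  (A : 'I_p -> set T) : set T :=
  [set w | delta phi (fun k => `[< A k w >]) == 1%N].

Definition iDelta (T : Type) (p : nat) (phi : {set 'I_p} -> bool)
  (i : 'I_p) (D : 'I_p -> set T) (A : set T) : set T :=
  Delta phi (fun k => if k == i then A else D k).

Definition posp (R : realDomainType) (y : R) : R := Order.max y 0.
Definition negp (R : realDomainType) (y : R) : R := Order.max (- y) 0.

(* A simple game is monotone, so player i's vote matters only on
   iD(Ω) \ iD(∅):  iD(A) = iD(∅) ∪ (A ∩ iD(Ω)).  With h = 1 - Π^i - g the
   integrand of ψ(C) is g + h·1_{iD(Y⁻¹C)}, so ψ is minimised pointwise by
   stopping exactly where h ≤ 0, and there h·1_{iD} = h⁺·1_{iD(∅)} - h⁻·1_{iD(Ω)}. *)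

From HB Require Import structures.
From mathcomp Require Import all_boot all_order all_algebra.
From mathcomp Require Import all_classical all_reals all_analysis.
From mathcomp Require Import lra measurable_realfun.
Set Implicit Arguments.
Unset Strict Implicit.
Unset Printing Implicit Defensive.
Import Order.TTheory GRing.Theory Num.Theory.
Local Open Scope classical_set_scope.
Local Open Scope ring_scope.

Lemma prod_indicator_eq p (x : 'I_p -> bool) (C : {set 'I_p}) :
  ((\prod_(k in C) (x k : nat)) * (\prod_(k in ~: C) (1 - (x k : nat))))%N =
  (C == [set k | x k]%SET).
Proof.
case: eqP => [->|/eqP neqC].
  rewrite big1 ?mul1n; last by move=> k; rewrite inE => ->.
  by rewrite big1 // => k; rewrite !inE => /negbTE ->.
have [k kCx] : exists k, (k \in C) != x k.
  apply/existsP; apply: contraR neqC => /existsPn eqCx; apply/eqP/setP => k.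
  by rewrite inE; apply/eqP; rewrite -[_ == _]negbK eqCx.
case kC: (k \in C) kCx; case xk: (x k) => // _.
  by rewrite (bigD1 k) //= xk.
by rewrite [X in (_ * X)%N](bigD1 k) ?inE ?kC //= xk muln0.
Qed.

Lemma deltaE p (phi : {set 'I_p} -> bool) (x : 'I_p -> bool) :
  delta phi x = phi [set k | x k]%SET.
Proof.
rewrite /delta; under eq_bigr do rewrite prod_indicator_eq.
case phix: (phi _).
  by rewrite (bigD1 [set k | x k]%SET) //= eqxx big1 // => C /andP[_ /negbTE ->].
by rewrite big1 // => C phiC; case: eqP => // eqC; move: phiC; rewrite eqC phix.
Qed.

Lemma DeltaP T p (phi : {set 'I_p} -> bool) (A : 'I_p -> set T) w :
  Delta phi A w <-> phi [set k | `[< A k w >]]%SET.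
Proof. by rewrite /Delta /= deltaE; case: (phi _). Qed.

Lemma simple_game_mono p (phi : {set 'I_p} -> bool) (S T : {set 'I_p}) :
  simple_game phi -> S \subset T -> phi S -> phi T.
Proof. by case=> _ _ mono ST; apply: contraLR; apply: mono. Qed.

Lemma iDeltaE T p (phi : {set 'I_p} -> bool) i (D : 'I_p -> set T) (A : set T) :
  simple_game phi ->
  iDelta phi i D A = iDelta phi i D set0 `|` (A `&` iDelta phi i D setT).
Proof.
move=> game; apply/funext => w; apply/propext; rewrite /iDelta.
set voters := fun B : set T => [set k | `[< (if k == i then B else D k) w >]]%SET.
have voters_sub : voters set0 \subset voters setT.
  by apply/fintype.subsetP => k; rewrite !inE; case: (k == i) => // /asboolP.
have votersA : voters A = if `[< A w >] then voters setT else voters set0.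
  apply/setP => k; case: asboolP => Aw; rewrite /voters !inE.
    by case: (k == i); rewrite // !asboolT.
  by case: (k == i); rewrite // !asboolF.
split; rewrite /= !DeltaP -/(voters A) votersA.
  by case: asboolP => Aw phiA; [right | left].
move=> [phi0 | [Aw phi1]]; case: asboolP => // _.
exact: simple_game_mono voters_sub phi0.
Qed.

Lemma iDelta_set0_sub_setT T p (phi : {set 'I_p} -> bool) i (D : 'I_p -> set T) :
  simple_game phi -> iDelta phi i D set0 `<=` iDelta phi i D setT.
Proof.
by move=> game; rewrite [X in _ `<=` X](iDeltaE _ _ setT game); exact: subsetUl.
Qed.

Lemma Delta_measurable d (T : measurableType d) p (phi : {set 'I_p} -> bool)
  (A : 'I_p -> set T) :
  (forall k, measurable (A k)) -> measurable (Delta phi A).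
Proof.
move=> mA.
have -> : Delta phi A = \bigcup_(S in [set S : {set 'I_p} | phi S])
    \bigcap_(k in [set: 'I_p]) (if k \in S then A k else ~` A k).
  apply/seteqP; split => w.
    by move/DeltaP => ?; exists [set k | `[< A k w >]]%SET => // k _;
      rewrite inE; case: asboolP.
  case=> S /= phiS Sw; apply/DeltaP.
  suff -> : [set k | `[< A k w >]]%SET = S by [].
  by apply/setP => k; rewrite inE; move: (Sw k I); case: (k \in S) => ?;
    [exact: asboolT | exact: asboolF].
apply: fin_bigcup_measurable; first exact: finite_finset.
move=> S _; apply: fin_bigcap_measurable; first exact: finite_finset.
by move=> k _; case: (k \in S); [exact: mA | exact/measurableC/mA].
Qed.

Lemma iDelta_measurable d (T : measurableType d) p (phi : {set 'I_p} -> bool) i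
  (D : 'I_p -> set T) (A : set T) :
  (forall j, j != i -> measurable (D j)) -> measurable A ->
  measurable (iDelta phi i D A).
Proof.
by move=> mD mA; apply: Delta_measurable => k /=; case: ifPn => // /mD.
Qed.

Lemma pospE (R : realDomainType) (y : R) : posp y = if 0 <= y then y else 0.
Proof.
by rewrite /posp /Order.max; case: (ltP y 0); case: (leP 0 y) => //; lra.
Qed.

Lemma negpE (R : realDomainType) (y : R) : negp y = if 0 <= y then 0 else - y.
Proof.
by rewrite /negp /Order.max; case: (ltP (- y) 0); case: (leP 0 y) => //; lra.
Qed.

Lemma normr_posp_le (R : realDomainType) (y : R) : `|posp y| <= `|y|.
Proof. by rewrite pospE; case: ifP; rewrite ?normr0. Qed.

Lemma normr_negp_le (R : realDomainType) (y : R) : `|negp y| <= `|y|.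
Proof. by rewrite negpE; case: ifP; rewrite ?normr0 ?normrN. Qed.

Lemma mul_indic_add_indicC (T : Type) (R : pzRingType) (S : set T) (a b : R) w :
  a * \1_S w + b * \1_(~` S) w = b + (a - b) * \1_S w.
Proof.
rewrite !indicE in_setC; case: (w \in S) => /=.
  by rewrite !mulr1 mulr0 addr0 addrCA subrr addr0.
by rewrite !mulr0 mulr1 add0r addr0.
Qed.

Lemma mul_indic_threshold_le (T : Type) (R : realDomainType) (h : T -> R)
  (B0 B1 A : set T) w :
  h w * \1_(B0 `|` ([set x | h x <= 0] `&` B1)) w <=
  h w * \1_(B0 `|` (A `&` B1)) w.
Proof.
rewrite !indicE !in_setU !in_setI.
have -> : (w \in [set x | h x <= 0]) = (h w <= 0).
  by apply/idP/idP => [/set_mem|/mem_set].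
case: (w \in B0) (w \in B1) (w \in A) => [] [] [];
  rewrite /= ?andbT ?andbF ?mulr1 ?mulr0 //.
all: by case: (leP (h w) 0) => hw; rewrite ?mulr1 ?mulr0 // ltW.
Qed.

Lemma mul_indic_thresholdE (T : Type) (R : realDomainType) (h : T -> R)
  (B0 B1 : set T) w : B0 `<=` B1 ->
  h w * \1_(B0 `|` ([set x | h x <= 0] `&` B1)) w =
  posp (h w) * \1_B0 w - negp (h w) * \1_B1 w.
Proof.
move=> B01; rewrite !indicE !in_setU !in_setI pospE negpE.
have -> : (w \in [set x | h x <= 0]) = (h w <= 0).
  by apply/idP/idP => [/set_mem|/mem_set].
case: (boolP (w \in B0)) => [wB0 | _] /=.
  have -> : w \in B1 by apply/mem_set/B01/set_mem.
  by case: (leP 0 (h w)) => hw; rewrite ?mulr1 ?mulr0 ?subr0 ?sub0r ?opprK.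
case: (w \in B1); rewrite /= ?andbT ?andbF ?mulr0 ?subr0 //.
by case: (leP 0 (h w)) => hw; case: (leP (h w) 0) => hw';
  rewrite ?mulr1 ?mulr0 ?sub0r ?opprK //; lra.
Qed.

Lemma measurable_nonpos d (T : measurableType d) (R : realType) (f : T -> R) :
  measurable_fun setT f -> measurable [set x | f x <= 0].
Proof.
move=> mf; have : measurable_fun setT (fun x => f x <= 0).
  exact: measurable_fun_ler mf (measurable_cst _).
by move=> /(_ measurableT [set true] I); rewrite setTI.
Qed.

Lemma integrable_one_sub_prob_sub d (T : measurableType d) (R : realType)
  (mu : {finite_measure set T -> \bar R}) (q g : T -> R) :
  measurable_fun setT q -> (forall w, 0 <= q w <= 1) ->
  mu.-integrable setT (fun w => (g w)%:E) ->
  mu.-integrable setT (fun w => (1 - q w - g w)%:E).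
Proof.
move=> mq q01 gint; have : mu.-integrable setT (EFin \o (fun w => 1 - q w)).
  apply: le_integrable (finite_measure_integrable_cst _ 1 measurableT).
  - exact: measurableT.
  - exact/measurable_EFinP/measurable_funB.
  - move=> w _ /=; have /andP[q0 q1] := q01 w.
    by rewrite normr1 lee_fin ger0_norm ?subr_ge0 // lerBlDr lerDl.
by move=> /(integrableB measurableT)/(_ gint); apply: eq_integrable.
Qed.

(* Player i stops on [A]; the system then stops on [B0 `|` (A `&` B1)], where
   [B0] ([B1]) is where the other votes make it stop when i votes to continue
   (to stop).  Stopping costs [g + h], continuing costs [g]. *)
Definition stopping_payoff d (T : measurableType d) (R : realType)
  (mu : {measure set T -> \bar R}) (g h : T -> R) (B0 B1 A : set T) : \bar R :=
  \int[mu]_w (g w + h w * \1_(B0 `|` (A `&` B1)) w)%:E.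

Section threshold_rule.
Context d (T : measurableType d) (R : realType) (mu : {measure set T -> \bar R}).
Variables (g h : T -> R) (B0 B1 : set T).
Hypotheses (gint : mu.-integrable setT (fun w => (g w)%:E))
  (hint : mu.-integrable setT (fun w => (h w)%:E)).
Hypotheses (mB0 : measurable B0) (mB1 : measurable B1).

Let mh : measurable_fun setT h.
Proof. exact/measurable_EFinP/(measurable_int mu hint). Qed.

Let mul_indic_integrable (f : T -> R) B : measurable_fun setT f ->
  measurable B -> (forall w, `|f w| <= `|h w|) ->
  mu.-integrable setT (EFin \o (fun w => f w * \1_B w)).
Proof.
move=> mf mB fh; apply: le_integrable hint => //.
  by apply/measurable_EFinP/measurable_funM => //; exact: measurable_indic.
move=> w _; rewrite lee_fin normrM (le_trans _ (fh w)) // ler_piMr // indicE.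
by case: (w \in B); rewrite ?normr1 ?normr0.
Qed.

Let gain_integrable A : measurable A ->
  mu.-integrable setT (fun w => (g w + h w * \1_(B0 `|` (A `&` B1)) w)%:E).
Proof.
move=> mA; have mB : measurable (B0 `|` (A `&` B1)).
  exact/measurableU/measurableI.
by apply: eq_integrable (integrableD measurableT gint
  (mul_indic_integrable mh mB (fun=> lexx _))).
Qed.

Lemma threshold_rule_optimal A : measurable A ->
  (stopping_payoff mu g h B0 B1 [set x | (h x <= 0)%R]
    <= stopping_payoff mu g h B0 B1 A)%E.
Proof.
move=> mA; apply: le_integral => //.
- exact/gain_integrable/measurable_nonpos.
- exact: gain_integrable.
- by move=> w _; rewrite lee_fin lerD2l mul_indic_threshold_le.
Qed.

Lemma threshold_rule_value : B0 `<=` B1 ->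
  (stopping_payoff mu g h B0 B1 [set x | (h x <= 0)%R] =
  \int[mu]_w (posp (h w) * \1_B0 w)%:E - \int[mu]_w (negp (h w) * \1_B1 w)%:E
   + \int[mu]_w (g w)%:E)%E.
Proof.
move=> B01.
have mposp : measurable_fun setT (fun w => posp (h w)).
  exact: measurable_maxr mh (measurable_cst _).
have mnegp : measurable_fun setT (fun w => negp (h w)).
  exact: measurable_maxr (measurable_funN mh) (measurable_cst _).
have pos_int := mul_indic_integrable mposp mB0 (fun w => normr_posp_le (h w)).
have neg_int := mul_indic_integrable mnegp mB1 (fun w => normr_negp_le (h w)).
rewrite /stopping_payoff; under eq_integral do rewrite mul_indic_thresholdE //.
rewrite (integralD_EFin measurableT gint); last first.
  exact: eq_integrable (integrableB measurableT pos_int neg_int).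
by rewrite (integralB_EFin measurableT pos_int neg_int) addeC.
Qed.

End threshold_rule.

Theorem lemma1 (R : realType) (m p : nat) (phi : {set 'I_p} -> bool)
  (dO : measure_display) (Omega : measurableType dO) (P : probability Omega R)
  (E : set (m.-tuple R))
  (X : Omega -> m.-tuple R) (Pi : Omega -> p.-tuple R)
  (i : 'I_p) (g : (m.-tuple R * p.-tuple R)%type -> R)
  (Cs : 'I_p -> set (m.-tuple R * p.-tuple R)%type) :
  simple_game phi ->
  measurable_fun setT X -> measurable_fun setT Pi ->
  (forall w, E (X w)) ->
  (forall w (k : 'I_p), 0 <= tnth (Pi w) k <= 1) ->
  measurable_fun setT g ->
  P.-integrable setT (fun w => (g (X w, Pi w))%:E) ->
  (forall j, j != i -> measurable (Cs j)) ->
  let Y := fun w => (X w, Pi w) in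
  let D := fun j => Y @^-1` Cs j in
  let iD := iDelta phi i D in
  let psi := fun C : set (m.-tuple R * p.-tuple R)%type =>
    (\int[P]_w ((1 - tnth (Pi w) i) * \1_(iD (Y @^-1` C)) w
                + g (Y w) * \1_(~` iD (Y @^-1` C)) w)%:E)%E in
  let Cstar := [set s : (m.-tuple R * p.-tuple R)%type |
                 1 - tnth s.2 i - g s <= 0] in
  [/\ measurable Cstar,
      psi Cstar = ereal_inf (psi @` measurable) &
      psi Cstar =
        (\int[P]_w (posp (1 - tnth (Pi w) i - g (Y w)) * \1_(iD set0) w)%:E
         - \int[P]_w (negp (1 - tnth (Pi w) i - g (Y w)) * \1_(iD setT) w)%:E
         + \int[P]_w (g (Y w))%:E)%E].
Proof.
move=> game mX mPi _ Pi01 mg gint mCs Y D iD psi Cstar.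
pose h w := 1 - tnth (Pi w) i - g (Y w).
have mY : measurable_fun setT Y by exact: measurable_fun_pair.
have mpre C : measurable C -> measurable (Y @^-1` C).
  by move=> mC; rewrite -[_ @^-1` _]setTI; exact: mY.
have miD A : measurable A -> measurable (iD A).
  by apply: iDelta_measurable => j /mCs /mpre.
have hint : P.-integrable setT (fun w => (h w)%:E).
  apply: integrable_one_sub_prob_sub gint => [|w]; last exact: Pi01.
  exact: measurableT_comp (measurable_tnth i) mPi.
have psiE C : psi C =
    stopping_payoff P (g \o Y) h (iD set0) (iD setT) (Y @^-1` C).
  by apply: eq_integral => w _; rewrite mul_indic_add_indicC -iDeltaE.
have mCstar : measurable Cstar.
  apply: measurable_nonpos; apply: measurable_funB mg.
  apply: measurable_funB => //.
  exact: measurableT_comp (measurable_tnth i) measurable_snd.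
have CstarE : Y @^-1` Cstar = [set w | h w <= 0] by [].
split => //; rewrite psiE CstarE.
  apply/eqP; rewrite eq_le ereal_inf_lbound ?andbT; last by exists Cstar.
  apply: le_ereal_inf_tmp => _ [C mC <-]; rewrite psiE.
  exact: (threshold_rule_optimal (g := g \o Y) gint hint
    (miD _ measurable0) (miD _ measurableT) (mpre _ mC)).
apply: (threshold_rule_value (g := g \o Y) gint hint
  (miD _ measurable0) (miD _ measurableT)).
exact: iDelta_set0_sub_setT.
Qed.
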